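(* Suppose $N$ carries a $B$-grading and a $B'$-grading such that the $B'$-grading refines the $B$-grading, and suppose $M$ is a $B$-graded submodule of $N$, i.e. $M=\bigoplus_{b\in B}(M\cap N_b)$. Then every element of every reduced Macaulay basis of $M$ with respect to the $B'$-grading is $B$-homogeneous.
   Context: Standing setup. $\mathbf{k}$ is a field. $(A,+,0)$ is a finitely generated cancellative commutative monoid with a well-ordered total order such that $0<a$ for $a\ne0$ and $a\le a'\Rightarrow a+c\le a'+c$. $R=\bigoplus_{a\in A}R_a$ is a commutative Noetherian $\mathbf{k}$-algebra with $R_aR_{a'}\subseteq R_{a+a'}$. $B$ and $B'$ are well-ordered totally ordered sets, each with an action $(a,b)\mapsto a\cdot b$ of $A$ satisfying $0\cdot b=b$, $(a+a')\cdot b=a\cdot(a'\cdot b)$, monotone and cancellative in each argument. $N$ is a Noetherian $R$-module with gradings $N=\bigoplus_{b\in B}N_b=\bigoplus_{b'\in B'}N'_{b'}$, $R_aN_b\subseteq N_{a\cdot b}$, $R_aN'_{b'}\subseteq N'_{a\cdot b'}$; $M\subseteq N$ an $R$-submodule. The $B'$-grading refines the $B$-grading if there is an order-preserving map $g:B'\to B$ with $g(a\cdot b')=a\cdot g(b')$ and $N_b=\bigoplus_{b'\in g^{-1}(b)}N'_{b'}$ for all $b$. For a nonzero $m$, $\deg m$, $\operatorname{lf}(m)$ (w.r.t. a chosen grading) are the largest degree of a nonzero homogeneous component and that component. A finite set $X$ of nonzero elements of $M$ is a Macaulay basis of $M$ w.r.t. a grading if the $R$-submodule generated by $\{\operatorname{lf}(p):0\ne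 p\in M\}$ equals that generated by $\{\operatorname{lf}(x):x\in X\}$. Reduction (w.r.t. the $B'$-grading): $W_{b'}(X)=\operatorname{span}_{\mathbf{k}}\{r\operatorname{lf}(x): x\in X,\ r\in R\text{ homogeneous},\ r\operatorname{lf}(x)\in N'_{b'}\}$; $m\to_X m'$ iff $\{b': m_{b'}\ne0,\ m_{b'}\in W_{b'}(X)\}$ is nonempty with maximum $b'$ and $m'=m-\sum_jr_jx_j$ with $x_j\in X$, $r_j$ homogeneous, $r_j\operatorname{lf}(x_j)\in N'_{b'}$, $m_{b'}=\sum_jr_j\operatorname{lf}(x_j)$. A reduced Macaulay basis is a Macaulay basis $X$ such that for each $x\in X$ there is no $m'$ with $x\to_{X\setminus\{x\}}m'$. *)

From HB Require Import structures.
From mathcomp Require Import all_boot all_order all_algebra.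
From Stdlib Require Import ClassicalEpsilon.
Set Implicit Arguments. Unset Strict Implicit. Unset Printing Implicit Defensive.
Import Order.TTheory GRing.Theory.
Local Open Scope ring_scope.

Definition total_order (T : Type) (le : T -> T -> Prop) :=
  (forall x, le x x) /\ (forall x y, le x y -> le y x -> x = y) /\
  (forall x y z, le x y -> le y z -> le x z) /\ (forall x y, le x y \/ le y x).

Definition well_ordered_rel (T : Type) (le : T -> T -> Prop) :=
  forall P : T -> Prop, (exists x, P x) -> exists x, P x /\ forall y, P y -> le x y.

Definition well_ordered (d : Order.disp_t) (T : orderType d) :=
  well_ordered_rel (fun x y : T => (x <= y)%O).

Definition cancellative (A : nmodType) := forall a b c : A, a + c = b + c -> a = b.

Definition fg_monoid (A : nmodType) :=
  exists s : seq A, forall a : A, exists n : 'I_(size s) -> nat,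
      a = \sum_(i < size s) s`_i *+ n i.

Definition ordered_monoid (A : nmodType) (leA : A -> A -> Prop) :=
  [/\ fg_monoid A, cancellative A, total_order leA, well_ordered_rel leA &
      (forall a : A, a <> 0 -> leA 0 a /\ 0 <> a) ] /\
  (forall a a' c : A, leA a a' -> leA (a + c) (a' + c)).

Definition monoid_action (A : nmodType) (leA : A -> A -> Prop)
    (d : Order.disp_t) (B : orderType d) (act : A -> B -> B) :=
  [/\ (forall b, act 0 b = b),
      (forall a a' b, act (a + a') b = act a (act a' b)) &
      (forall a a' b, leA a a' -> (act a b <= act a' b)%O)] /\
  [/\ (forall a b b', (b <= b')%O -> (act a b <= act a b')%O),
      (forall a a' b, act a b = act a' b -> a = a') &
      (forall a b b', act a b = act a b' -> b = b')].

Definition is_decomp (I : eqType) (T : nmodType) (V : I -> T -> Prop)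
    (m : T) (c : I -> T) :=
  (forall i, V i (c i)) /\
  exists s : seq I, [/\ uniq s, (forall i, i \notin s -> c i = 0) &
                        m = \sum_(i <- s) c i].

Definition direct_sum (I : eqType) (T : nmodType) (U : T -> Prop)
    (V : I -> T -> Prop) :=
  [/\ (forall i v, V i v -> U v),
      (forall m, U m -> exists c, is_decomp V m c) &
      (forall m c c', is_decomp V m c -> is_decomp V m c' -> forall i, c i = c' i)].

Section Modules.
Variables (k : fieldType) (R : comAlgType k) (N : lmodType R).

Definition ksubspaceR (P : R -> Prop) :=
  [/\ P 0, (forall u v, P u -> P v -> P (u + v)) & (forall (c : k) u, P u -> P (c *: u))].

Definition ksubspaceN (P : N -> Prop) :=
  [/\ P 0, (forall u v, P u -> P v -> P (u + v)) & (forall (c : k) u, P u -> P (c%:A *: u))].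

Definition ideal (P : R -> Prop) :=
  [/\ P 0, (forall u v, P u -> P v -> P (u + v)) & (forall r u, P u -> P (r * u))].

Definition submodule (P : N -> Prop) :=
  [/\ P 0, (forall u v, P u -> P v -> P (u + v)) & (forall (r : R) u, P u -> P (r *: u))].

Definition rspan (S : N -> Prop) (v : N) :=
  exists n (r : 'I_n -> R) (y : 'I_n -> N), (forall i, S (y i)) /\ v = \sum_i r i *: y i.

Definition kspan (S : N -> Prop) (v : N) :=
  exists n (c : 'I_n -> k) (y : 'I_n -> N), (forall i, S (y i)) /\ v = \sum_i (c i)%:A *: y i.

Definition ispan (S : R -> Prop) (v : R) :=
  exists n (r : 'I_n -> R) (y : 'I_n -> R), (forall i, S (y i)) /\ v = \sum_i r i * y i.

Definition noetherian_ring :=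
  forall P : R -> Prop, ideal P ->
    exists n (y : 'I_n -> R), forall v, P v <-> ispan (fun u => exists i, u = y i) v.

Definition noetherian_module :=
  forall P : N -> Prop, submodule P ->
    exists n (y : 'I_n -> N), forall v, P v <-> rspan (fun u => exists i, u = y i) v.

End Modules.

Definition ring_grading (k : fieldType) (R : comAlgType k) (A : nmodType)
    (RA : A -> R -> Prop) :=
  [/\ (forall a, ksubspaceR (RA a)), direct_sum (fun _ => True) RA &
      (forall a a' r r', RA a r -> RA a' r' -> RA (a + a') (r * r'))].

Definition module_grading (k : fieldType) (R : comAlgType k) (N : lmodType R)
    (A : nmodType) (RA : A -> R -> Prop) (d : Order.disp_t) (B : orderType d)
    (act : A -> B -> B) (NB : B -> N -> Prop) :=
  [/\ (forall b, ksubspaceN (NB b)), direct_sum (fun _ => True) NB &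
      (forall a b r n, RA a r -> NB b n -> NB (act a b) (r *: n))].

Definition refines (k : fieldType) (R : comAlgType k) (N : lmodType R)
    (A : nmodType) (d : Order.disp_t) (B : orderType d) (d' : Order.disp_t)
    (B' : orderType d') (actB : A -> B -> B) (actB' : A -> B' -> B')
    (NB : B -> N -> Prop) (NB' : B' -> N -> Prop) :=
  exists g : B' -> B,
    [/\ (forall b1 b2, (b1 <= b2)%O -> (g b1 <= g b2)%O),
        (forall a b', g (actB' a b') = actB a (g b')) &
        (forall b, direct_sum (NB b)
                     (fun b' v => if g b' == b then NB' b' v else v = 0))].

Definition graded_submodule (k : fieldType) (R : comAlgType k) (N : lmodType R)
    (d : Order.disp_t) (B : orderType d) (NB : B -> N -> Prop) (M : N -> Prop) :=
  direct_sum M (fun b v => M v /\ NB b v).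

Section Leading.
Variables (k : fieldType) (R : comAlgType k) (N : lmodType R)
          (A : nmodType) (RA : A -> R -> Prop)
          (d : Order.disp_t) (B : orderType d) (NB : B -> N -> Prop).

(* the homogeneous component m_b (the decomposition is unique under a grading) *)
Definition comp (m : N) : B -> N :=
  epsilon (inhabits (fun _ => 0)) (fun c => is_decomp NB m c).

Definition is_deg (m : N) (b : B) :=
  comp m b <> 0 /\ forall b'', comp m b'' <> 0 -> (b'' <= b)%O.

Definition lf (m : N) : N :=
  epsilon (inhabits 0) (fun v => exists b, is_deg m b /\ v = comp m b).

Definition homogeneous (m : N) := exists b, NB b m.

Definition macaulay_basis (M : N -> Prop) (X : seq N) :=
  (forall x, x \in X -> x <> 0 /\ M x) /\
  forall v, rspan (fun u => exists p, [/\ M p, p <> 0 & u = lf p]) v <->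
            rspan (fun u => exists2 x, x \in X & u = lf x) v.

Definition Wsp (X : seq N) (b : B) : N -> Prop :=
  kspan (fun v => exists x r a, [/\ x \in X, RA a r, v = r *: lf x & NB b v]).

Definition reduces (X : seq N) (m m' : N) :=
  exists b : B,
    [/\ comp m b <> 0 /\ Wsp X b (comp m b),
        (forall c, comp m c <> 0 -> Wsp X c (comp m c) -> (c <= b)%O) &
        exists n (r : 'I_n -> R) (y : 'I_n -> N),
          [/\ (forall j, y j \in X), (forall j, exists a, RA a (r j)),
              (forall j, NB b (r j *: lf (y j))),
              comp m b = \sum_j r j *: lf (y j) &
              m' = m - \sum_j r j *: y j]].

Definition reduced_macaulay_basis (M : N -> Prop) (X : seq N) :=
  macaulay_basis M X /\
  forall x, x \in X -> ~ exists m', reduces [seq y <- X | y != x] x m'.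

End Leading.

From Pilot Require Import Defs.
From HB Require Import structures.
From mathcomp Require Import all_boot all_order all_algebra.
From Stdlib Require Import ClassicalEpsilon Classical.
Set Implicit Arguments. Unset Strict Implicit. Unset Printing Implicit Defensive.
Import Order.TTheory GRing.Theory.
Local Open Scope ring_scope.

(* Let x be an element of a reduced Macaulay basis X of M (w.r.t. the finer
   B'-grading) and suppose x is not B-homogeneous.  Let bx be the B'-degree of
   x and pick a nonzero B-component x_c0 with c0 <> g bx; it lies in M because
   M is B-graded.  If d is the B'-degree of x_c0, refinement gives g d = c0 and
   shows that the B'-component of x in degree d is lf(x_c0); so c0 <= g bx.
   As X is a Macaulay basis, lf(x_c0) is an R-combination of leading forms of
   X, and taking homogeneous parts puts it in W_d(Y) for the set Y of those y
   in X whose degree can be moved to d by A.  The element x is not in Y, since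
   that would force c0 >= g bx.  Thus x reduces modulo X \ {x}: contradiction. *)

Lemma seq_max (d : Order.disp_t) (T : orderType d) (P : T -> Prop) (s : seq T) :
  (exists2 x, x \in s & P x) ->
  exists x, [/\ x \in s, P x & forall y, y \in s -> P y -> (y <= x)%O].
Proof.
elim: s => [[x] //|a s IH] Ha_s.
have [Hs|no_s] := classic (exists2 x, x \in s & P x); last first.
  have Pa : P a.
    by case: Ha_s => x; rewrite inE => /predU1P[-> //|xs Px]; case: no_s; exists x.
  exists a; split=> [||y]; [exact: mem_head | done |].
  by rewrite inE => /predU1P[-> //|ys Py]; case: no_s; exists y.
have [m [ms Pm m_max]] := IH Hs.
have [[Pa lt_ma]|not_a] := classic (P a /\ (m < a)%O).
  exists a; split=> [||y]; [exact: mem_head | done |].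
  rewrite inE => /predU1P[-> //|ys Py]; exact: le_trans (m_max y ys Py) (ltW lt_ma).
exists m; split=> [||y]; [by rewrite inE ms orbT | done |].
rewrite inE => /predU1P[-> Pa|]; last exact: m_max.
by rewrite leNgt; apply/negP => lt_ma; apply: not_a.
Qed.

Section Decompositions.
Variables (I : eqType) (T : nmodType) (V : I -> T -> Prop).
Hypotheses (V0 : forall i, V i 0) (VD : forall i u v, V i u -> V i v -> V i (u + v)).

Lemma sum_support (s t : seq I) (c : I -> T) :
  uniq s -> uniq t -> (forall i, i \notin s -> c i = 0) -> {subset s <= t} ->
  \sum_(i <- t) c i = \sum_(i <- s) c i.
Proof.
move=> us ut c_supp st.
rewrite (bigID (fun i => i \in s)) /= [X in _ + X]big1 ?addr0; last by move=> i /c_supp.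
rewrite -big_filter; apply/perm_big/uniq_perm; rewrite ?filter_uniq //.
by move=> i; rewrite mem_filter andb_idr //; apply: st.
Qed.

Lemma decomp0 : is_decomp V 0 (fun _ => 0).
Proof. by split=> //; exists [::]; rewrite big_nil. Qed.

Lemma decomp_delta i m : V i m -> is_decomp V m (fun j => if j == i then m else 0).
Proof.
move=> Vm; split=> [j|]; first by case: eqP => [->|].
exists [:: i]; split=> [//|j|]; last by rewrite big_seq1 eqxx.
by rewrite inE; case: eqP.
Qed.

Lemma decomp_add m1 m2 c1 c2 : is_decomp V m1 c1 -> is_decomp V m2 c2 ->
  is_decomp V (m1 + m2) (fun i => c1 i + c2 i).
Proof.
move=> [V1 [s1 [u1 z1 e1]]] [V2 [s2 [u2 z2 e2]]]; split=> [i|]; first exact: VD.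
have uu := undup_uniq (s1 ++ s2).
exists (undup (s1 ++ s2)); split=> // [i|].
  by rewrite mem_undup mem_cat negb_or => /andP[/z1 -> /z2 ->]; rewrite addr0.
rewrite big_split /= (@sum_support s1 _ c1) ?(@sum_support s2 _ c2) -?e1 -?e2 //.
- by move=> i Hi; rewrite mem_undup mem_cat Hi orbT.
- by move=> i Hi; rewrite mem_undup mem_cat Hi.
Qed.

Lemma decomp_sum (J : Type) (r : seq J) (m : J -> T) (c : J -> I -> T) :
  (forall j, is_decomp V (m j) (c j)) ->
  is_decomp V (\sum_(j <- r) m j) (fun i => \sum_(j <- r) c j i).
Proof.
move=> Dm; elim: r => [|j r IH].
  split=> [i|]; first by rewrite big_nil.
  by exists [::]; split=> [//|i _|]; rewrite !big_nil.
rewrite big_cons; have [Vc [s [us zs es]]] := decomp_add (Dm j) IH.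
split=> [i|]; first by rewrite big_cons; apply: Vc.
exists s; split=> // [i /zs|]; first by rewrite big_cons.
by rewrite es; apply: eq_bigr => i _; rewrite big_cons.
Qed.

End Decompositions.

Section Spans.
Variables (k : fieldType) (R : comAlgType k) (N : lmodType R).

Lemma rspan_gen (S : N -> Prop) v : S v -> rspan S v.
Proof. by move=> Sv; exists 1%N, (fun=> 1), (fun=> v); rewrite big_ord1 scale1r. Qed.

Lemma kspan_gen (S : N -> Prop) v : S v -> kspan S v.
Proof. by move=> Sv; exists 1%N, (fun=> 1), (fun=> v); rewrite big_ord1 !scale1r. Qed.

Lemma kspan0 (S : N -> Prop) : kspan S 0.
Proof. by exists 0%N, (fun=> 0), (fun=> 0); rewrite big_ord0; split=> [[]|]. Qed.

Lemma kspanD (S : N -> Prop) u v : kspan S u -> kspan S v -> kspan S (u + v).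
Proof.
move=> [n1 [c1 [y1 [S1 ->]]]] [n2 [c2 [y2 [S2 ->]]]].
pose glue (T : Type) (f1 : 'I_n1 -> T) (f2 : 'I_n2 -> T) i :=
  match split i with inl j => f1 j | inr j => f2 j end.
exists (n1 + n2)%N, (glue _ c1 c2), (glue _ y1 y2); split=> [i|].
  by rewrite /glue; case: (split i).
rewrite big_split_ord; congr (_ + _); apply: eq_bigr => i _.
  by rewrite /glue -[lshift _ _]/(unsplit (inl i)) unsplitK.
by rewrite /glue -[rshift _ _]/(unsplit (inr i)) unsplitK.
Qed.

Lemma kspan_sum (S : N -> Prop) (J : Type) (r : seq J) (f : J -> N) :
  (forall j, kspan S (f j)) -> kspan S (\sum_(j <- r) f j).
Proof. by move=> Sf; apply: big_ind => //; [exact: kspan0 | exact: kspanD]. Qed.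

End Spans.

Section Components.
Variables (k : fieldType) (R : comAlgType k) (N : lmodType R).
Variables (d : Order.disp_t) (B : orderType d) (NB : B -> N -> Prop).
Hypotheses (NB_sub : forall b, ksubspaceN (NB b))
           (DS : direct_sum (fun _ => True) NB).

Lemma grade0 b : NB b 0.
Proof. by case: (NB_sub b). Qed.

Lemma gradeD b u v : NB b u -> NB b v -> NB b (u + v).
Proof. by case: (NB_sub b) => _ addNB _; apply: addNB. Qed.

Lemma comp_spec m : is_decomp NB m (Defs.comp NB m).
Proof. by apply: epsilon_spec; case: DS => _ decomp _; apply: decomp. Qed.

Lemma comp_unique m c : is_decomp NB m c -> forall b, Defs.comp NB m b = c b.
Proof. by move=> Dc; case: DS => _ _ uniq_decomp; apply: uniq_decomp (comp_spec m) Dc. Qed.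

Lemma comp_hom m b : NB b (Defs.comp NB m b).
Proof. by case: (comp_spec m). Qed.

Lemma comp0 b : Defs.comp NB 0 b = 0.
Proof. exact: comp_unique (decomp0 grade0) b. Qed.

Lemma comp_supp m : exists s, [/\ uniq s, forall b, Defs.comp NB m b <> 0 -> b \in s
   & m = \sum_(b <- s) Defs.comp NB m b].
Proof.
have [_ [s [us zs ms]]] := comp_spec m.
by exists s; split=> // b nz; apply/negPn/negP => /zs.
Qed.

Lemma lf_spec m : m <> 0 -> exists b, is_deg NB m b /\ lf NB m = Defs.comp NB m b.
Proof.
move=> m_nz; apply: (epsilon_spec (inhabits 0)
  (fun v => exists b, is_deg NB m b /\ v = Defs.comp NB m b)).
have [s [_ s_supp ms]] := comp_supp m.
have [|b [_ nz b_max]] := seq_max (P := fun b => Defs.comp NB m b <> 0) (s := s).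
  apply: NNPP => no_comp; apply: m_nz; rewrite ms big1_seq // => b /= bs.
  by apply: NNPP => nz; apply: no_comp; exists b.
exists (Defs.comp NB m b), b; split=> //; split=> // b' nz'.
exact: b_max (s_supp _ nz') nz'.
Qed.

Lemma is_deg_unique m b b' : is_deg NB m b -> is_deg NB m b' -> b = b'.
Proof. by move=> [nz le_b] [nz' le_b']; apply/eqP; rewrite eq_le le_b' // le_b. Qed.

Lemma nonhomogeneous_comp m b : ~ homogeneous NB m ->
  exists c, c <> b /\ Defs.comp NB m c <> 0.
Proof.
move=> not_hom; apply: NNPP => no_comp; apply: not_hom; exists b.
have [s [_ _ ->]] := comp_supp m.
apply: (big_ind (NB b)); [exact: grade0 | exact: gradeD |] => c _.
have [->|cb] := eqVneq c b; first exact: comp_hom.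
have -> : Defs.comp NB m c = 0.
  by apply: NNPP => nz; apply: no_comp; exists c; split=> //; apply/eqP.
exact: grade0.
Qed.

Lemma graded_comp_mem (M : N -> Prop) m b :
  graded_submodule NB M -> M m -> M (Defs.comp NB m b).
Proof.
move=> [_ decomp _] Mm; have [e [He supp]] := decomp m Mm.
have De : is_decomp NB m e by split=> // c; case: (He c).
by rewrite (comp_unique De); case: (He b).
Qed.

End Components.

(* Acting by an element of A never decreases a degree, since 0 <= a. *)
Lemma act_increasing (A : nmodType) (leA : A -> A -> Prop)
    (d : Order.disp_t) (B : orderType d) (act : A -> B -> B) :
  ordered_monoid leA -> monoid_action leA act -> forall a b, (b <= act a b)%O.
Proof.
move=> [[_ _ [leA_refl _] _ leA_pos] _] [[act0 _ act_mono] _] a b.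
rewrite -{1}(act0 b); apply: act_mono.
by case: (eqVneq a 0) => [->|/eqP a_nz]; [apply: leA_refl | case: (leA_pos a a_nz)].
Qed.

Section Reduction.
Variables (k : fieldType) (R : comAlgType k) (N : lmodType R).
Variables (A : nmodType) (RA : A -> R -> Prop).
Variables (d : Order.disp_t) (B : orderType d) (act : A -> B -> B) (NB : B -> N -> Prop).
Hypotheses (RA_sub : forall a, ksubspaceR (RA a))
           (DSR : direct_sum (fun _ => True) RA).
Hypotheses (NB_sub : forall b, ksubspaceN (NB b))
           (DS : direct_sum (fun _ => True) NB)
           (NB_act : forall a b r n, RA a r -> NB b n -> NB (act a b) (r *: n)).

Let NB0 := grade0 NB_sub.
Let NBD := gradeD NB_sub.

Lemma ring_hom_decomp r : exists h : (A -> R) * seq A,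
  (forall a, RA a (h.1 a)) /\ r = \sum_(a <- h.2) h.1 a.
Proof.
case: DSR => _ decomp _; have [h [RAh [s [_ _ ->]]]] := decomp r I.
by exists (h, s).
Qed.

Lemma Wsp_of_rspan (X Y : seq N) (b : B) (v : N) :
  (forall y, y \in X -> y <> 0) ->
  (forall y a e, y \in X -> is_deg NB y e -> act a e = b -> y \in Y) ->
  NB b v -> rspan (fun u => exists2 y, y \in X & u = lf NB y) v ->
  Wsp RA NB Y b v.
Proof.
move=> X_nz X_Y vb [n [r [u [gen_u def_v]]]].
have /choice[y Hy] : forall i, exists y, y \in X /\ u i = lf NB y.
  by move=> i; have [y yX ->] := gen_u i; exists y.
have /choice[e He] : forall i,
    exists e, is_deg NB (y i) e /\ lf NB (y i) = Defs.comp NB (y i) e.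
  by move=> i; apply/lf_spec/X_nz; case: (Hy i).
have /choice[h Hh] := fun i => ring_hom_decomp (r i).
pose t i a := (h i).1 a *: lf NB (y i).
have t_hom i a : NB (act a (e i)) (t i a).
  by apply: NB_act; [case: (Hh i) | case: (He i) => _ ->; apply: comp_hom].
have Dv : is_decomp NB v (fun c =>
    \sum_i \sum_(a <- (h i).2) (if c == act a (e i) then t i a else 0)).
  rewrite def_v; apply: (decomp_sum NB0 NBD) => i.
  have -> : r i *: u i = \sum_(a <- (h i).2) t i a.
    by case: (Hy i) (Hh i) => _ -> [_ ->]; rewrite scaler_suml.
  by apply: (decomp_sum NB0 NBD) => a; apply: (decomp_delta NB0 (t_hom i a)).
have := comp_unique DS (decomp_delta NB0 vb) b.
rewrite eqxx (comp_unique DS Dv) => <-.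
apply: kspan_sum => i; apply: kspan_sum => a.
case: eqP => [b_eq|_]; last exact: kspan0.
apply: kspan_gen; exists (y i), ((h i).1 a), a; split=> //.
- by case: (Hy i) => yX _; apply: X_Y yX (proj1 (He i)) (esym b_eq).
- by case: (Hh i).
- by rewrite b_eq; apply: t_hom.
Qed.

(* If some nonzero component m_c of m lies in W_c(X), then m is reducible by X:
   reduce at the largest such degree. *)
Lemma reduces_of_Wsp (X : seq N) (m : N) (c : B) :
  Defs.comp NB m c <> 0 -> Wsp RA NB X c (Defs.comp NB m c) ->
  exists m', reduces RA NB X m m'.
Proof.
move=> nz Wc; have [s [_ s_supp _]] := comp_supp DS m.
have [|b [_ [b_nz Wb] b_max]] := seq_max (s := s)
    (P := fun c => Defs.comp NB m c <> 0 /\ Wsp RA NB X c (Defs.comp NB m c)).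
  by exists c; [apply: s_supp | split].
have [n [cc [u [gen_u def_mb]]]] := Wb.
have /choice[F HF] : forall j, exists F : N * R * A,
    [/\ F.1.1 \in X, RA F.2 F.1.2, u j = F.1.2 *: lf NB F.1.1 & NB b (u j)].
  by move=> j; have [x [r [a [? ? ? ?]]]] := gen_u j; exists (x, r, a).
exists (m - \sum_j ((cc j)%:A * (F j).1.2) *: (F j).1.1), b; split=> //.
  by move=> c' nz' Wc'; apply: b_max (s_supp _ nz') _.
exists n, (fun j => (cc j)%:A * (F j).1.2), (fun j => (F j).1.1); split=> //.
- by move=> j; case: (HF j).
- move=> j; exists (F j).2; rewrite mulr_algl.
  by case: (RA_sub (F j).2) => _ _ RA_k; apply: RA_k; case: (HF j).
- move=> j; rewrite -scalerA; case: (HF j) => _ _ <- ub.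
  by case: (NB_sub b) => _ _ NB_k; apply: NB_k.
- rewrite def_mb; apply: eq_bigr => j _.
  by rewrite -scalerA; case: (HF j) => _ _ ->.
Qed.

End Reduction.

Section Refinement.
Variables (k : fieldType) (R : comAlgType k) (N : lmodType R).
Variables (d : Order.disp_t) (B : orderType d) (d' : Order.disp_t) (B' : orderType d').
Variables (NB : B -> N -> Prop) (NB' : B' -> N -> Prop) (g : B' -> B).
Hypotheses (DS : direct_sum (fun _ => True) NB)
           (NB'_sub : forall b', ksubspaceN (NB' b'))
           (DS' : direct_sum (fun _ => True) NB').
Hypothesis g_ref : forall b,
  direct_sum (NB b) (fun b' v => if g b' == b then NB' b' v else v = 0).

Let NB'0 := grade0 NB'_sub.
Let NB'D := gradeD NB'_sub.

Lemma refined_comp_supp m c b' :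
  Defs.comp NB' (Defs.comp NB m c) b' <> 0 -> g b' = c.
Proof.
case: (g_ref c) => _ decomp _; have [e [Ve e_supp]] := decomp _ (comp_hom DS m c).
have De : is_decomp NB' (Defs.comp NB m c) e.
  by split=> // b''; move: (Ve b''); case: ifP => // _ ->.
by rewrite (comp_unique DS' De); move: (Ve b'); case: eqP => [-> //|_ -> []].
Qed.

Lemma refined_comp m b' :
  Defs.comp NB' m b' = Defs.comp NB' (Defs.comp NB m (g b')) b'.
Proof.
have [s [us s_supp def_m]] := comp_supp DS m.
have Dm : is_decomp NB' m
    (fun b => \sum_(c <- s) Defs.comp NB' (Defs.comp NB m c) b).
  by rewrite {1}def_m; apply: (decomp_sum NB'0 NB'D) => c; apply: comp_spec.
rewrite (comp_unique DS' Dm).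
have off_zero c : c != g b' -> Defs.comp NB' (Defs.comp NB m c) b' = 0.
  by move=> cg; apply: NNPP => /refined_comp_supp gc; rewrite gc eqxx in cg.
have [gs|gns] := boolP (g b' \in s).
  by rewrite (bigD1_seq (g b')) //= big1_seq ?addr0 // => c /andP[/off_zero].
have -> : Defs.comp NB m (g b') = 0 by apply: NNPP => /s_supp; apply/negP.
rewrite (comp0 NB'_sub DS') big1_seq // => c /andP[_ cs]; apply: off_zero.
by apply: contraNneq gns => <-.
Qed.

End Refinement.

Theorem mainTheorem16
  (k : fieldType) (A : nmodType) (leA : A -> A -> Prop)
  (R : comAlgType k) (RA : A -> R -> Prop)
  (dB : Order.disp_t) (B : orderType dB) (dB' : Order.disp_t) (B' : orderType dB')
  (actB : A -> B -> B) (actB' : A -> B' -> B')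
  (N : lmodType R) (NB : B -> N -> Prop) (NB' : B' -> N -> Prop) (M : N -> Prop) :
  ordered_monoid leA ->
  ring_grading RA -> noetherian_ring R ->
  well_ordered B -> well_ordered B' ->
  monoid_action leA actB -> monoid_action leA actB' ->
  noetherian_module N ->
  module_grading RA actB NB -> module_grading RA actB' NB' ->
  submodule M ->
  refines actB actB' NB NB' ->
  graded_submodule NB M ->
  forall X : seq N, reduced_macaulay_basis RA NB' M X ->
  forall x, x \in X -> homogeneous NB x.
Proof.
move=> ordA [RA_sub DSR _] _ _ _ actB_mon _ _ [NB_sub DSB _] [NB'_sub DSB' NB'_act] _
  [g [g_mono g_act g_ref]] M_graded X [[X_nzM lf_span] X_reduced] x xX.
apply: NNPP => x_inhom; have [x_nz Mx] := X_nzM x xX.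
have [bx [deg_x _]] := lf_spec DSB' x_nz.
have [c0 [c0_ne xc0_nz]] := nonhomogeneous_comp NB_sub DSB (g bx) x_inhom.
set xc0 := Defs.comp NB x c0.
have [d [[lf_nz _] lf_xc0]] := lf_spec DSB' xc0_nz.
have gd : g d = c0 := refined_comp_supp DSB NB'_sub DSB' g_ref lf_nz.
have x_d : Defs.comp NB' x d = lf NB' xc0.
  by rewrite (refined_comp DSB NB'_sub DSB' g_ref) gd lf_xc0.
have c0_le : (c0 <= g bx)%O.
  by rewrite -gd; apply: g_mono; case: deg_x => _; apply; rewrite x_d lf_xc0.
(* the x-free leading forms already generate x_d, since x itself would only
   contribute in B-degrees >= g bx > c0 *)
have W : Wsp RA NB' [seq y <- X | y != x] d (Defs.comp NB' x d).
  rewrite x_d; apply: (Wsp_of_rspan DSR NB'_sub DSB' NB'_act).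
  - by move=> y /X_nzM[].
  - move=> y a e yX deg_y act_e; rewrite mem_filter yX andbT.
    apply/eqP => y_x; apply: c0_ne; apply/eqP; rewrite eq_le c0_le /=.
    have e_bx : e = bx by apply: (is_deg_unique deg_y); rewrite y_x.
    by rewrite -gd -act_e e_bx g_act; apply: act_increasing ordA actB_mon _ _.
  - by rewrite lf_xc0; apply: comp_hom.
  - apply/lf_span/rspan_gen; exists xc0; split=> //; exact: graded_comp_mem.
apply: X_reduced xX _; apply: reduces_of_Wsp RA_sub NB'_sub DSB' _ _ _ _ W.
by rewrite x_d lf_xc0.
Qed.
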